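(* Let $\mathcal{S}\subset\mathbb{R}^n$ be compact convex with $\|x\|\le D$ for $x\in\mathcal{S}$, and let $f_1,\dots,f_T:\mathcal{S}\to\mathbb{R}$ be differentiable, $\ell$-strongly convex and $u$-smooth with $\|\nabla f_t(x)\|\le G$ on $\mathcal{S}$. Let $\theta_1\in\mathcal{S}$ and $\theta_{t+1}=\operatorname{argmin}_{\theta\in\mathcal{S}}\|\theta-(\theta_t-\eta_t\nabla f_t(\theta_t))\|^2$ with $\eta_t=\frac{1-\gamma}{\ell(\gamma-\gamma^t)+u(1-\gamma)}$ and $1-\gamma=1/T^\beta$, $\beta\in(0,1)$. Let $\theta^*$ minimize $\sum_{t=1}^Tf_t$ over $\mathcal{S}$. Then $$\sum_{t=1}^T\big(f_t(\theta_t)-f_t(\theta^* )\big)\le O(T^{1-\beta}).$$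
   Context: $\ell$-strongly convex: $f(y)\ge f(x)+\nabla f(x)^\top(y-x)+\frac\ell2\|x-y\|^2$; $u$-smooth: $\nabla f$ is $u$-Lipschitz. $O(\cdot)$ hides constants depending only on $\ell,u,G,D,\beta$. *)

From HB Require Import structures.
From mathcomp Require Import all_boot all_order all_algebra.
From mathcomp Require Import all_classical all_reals all_analysis.
Set Implicit Arguments. Unset Strict Implicit. Unset Printing Implicit Defensive.
Import Order.TTheory GRing.Theory Num.Theory numFieldNormedType.Exports.
Local Open Scope ring_scope.
Local Open Scope classical_set_scope.

Definition dotv (R : realType) (n : nat) (x y : 'rV[R]_n) : R :=
  \sum_(i < n) x ord0 i * y ord0 i.

Definition enorm (R : realType) (n : nat) (x : 'rV[R]_n) : R :=
  Num.sqrt (dotv x x).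

Definition has_gradient (R : realType) (n : nat) (f : 'rV[R]_n -> R)
    (x g : 'rV[R]_n) : Prop :=
  differentiable f x /\ forall v, 'd f x v = dotv g v.

(* Projection onto a convex set does not increase the distance to points of the
   set, so with d_t = |theta_t - theta*|^2 one projected gradient step and strong
   convexity give
     f_t(theta_t) - f_t(theta* )
       <= (1/(2 eta_t) - l/2) d_t - d_(t+1)/(2 eta_t) + eta_t G^2 / 2.
   The schedule satisfies 1/eta_t - l <= 1/eta_(t-1), so the distance terms
   telescope to d_1 / (2 eta_1) = u d_1 / 2 <= 2 u D^2.  Bernoulli's inequality
   gives eta_t <= (1/t + 1 - gamma) / min(l, u); the harmonic sum is at most
   (1 + 1/(1 - beta)) T^(1-beta) and T (1 - gamma) = T^(1-beta), which bounds the
   gradient terms.  The bound holds against any comparator in S. *)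

From HB Require Import structures.
From mathcomp Require Import all_boot all_order all_algebra.
From mathcomp Require Import all_classical all_reals all_analysis.
From mathcomp Require Import ring lra.
Import Order.TTheory GRing.Theory Num.Theory numFieldNormedType.Exports.
Local Open Scope ring_scope.
Local Open Scope classical_set_scope.

Set Implicit Arguments. Unset Strict Implicit. Unset Printing Implicit Defensive.

Section euclidean.
Variables (R : realType) (n : nat).
Implicit Types (x y z : 'rV[R]_n) (c : R).

Lemma dotvC x y : dotv x y = dotv y x.
Proof. by apply: eq_bigr => i _; rewrite mulrC. Qed.

Lemma dotvDl x y z : dotv (x + y) z = dotv x z + dotv y z.
Proof. by rewrite /dotv -big_split; apply: eq_bigr => i _; rewrite mxE mulrDl. Qed.

Lemma dotvZl c x y : dotv (c *: x) y = c * dotv x y.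
Proof. by rewrite /dotv mulr_sumr; apply: eq_bigr => i _; rewrite mxE mulrA. Qed.

Lemma dotvNl x y : dotv (- x) y = - dotv x y.
Proof. by rewrite -scaleN1r dotvZl mulN1r. Qed.

Lemma dotvDr x y z : dotv x (y + z) = dotv x y + dotv x z.
Proof. by rewrite dotvC dotvDl !(dotvC x). Qed.

Lemma dotvZr c x y : dotv x (c *: y) = c * dotv x y.
Proof. by rewrite dotvC dotvZl dotvC. Qed.

Lemma dotvNr x y : dotv x (- y) = - dotv x y.
Proof. by rewrite dotvC dotvNl dotvC. Qed.

Lemma dotv_ge0 x : 0 <= dotv x x.
Proof. by apply: sumr_ge0 => i _; rewrite -expr2 sqr_ge0. Qed.

Lemma enorm_ge0 x : 0 <= enorm x.
Proof. exact: sqrtr_ge0. Qed.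

Lemma enorm_sqr x : enorm x ^+ 2 = dotv x x.
Proof. by rewrite sqr_sqrtr // dotv_ge0. Qed.

Lemma enorm_sqrD x y :
  enorm (x + y) ^+ 2 = enorm x ^+ 2 + 2 * dotv x y + enorm y ^+ 2.
Proof.
by rewrite !enorm_sqr dotvDl !dotvDr (dotvC y x); ring.
Qed.

Lemma enorm_sqrZ c x : enorm (c *: x) ^+ 2 = c ^+ 2 * enorm x ^+ 2.
Proof. by rewrite !enorm_sqr dotvZl dotvZr mulrA -expr2. Qed.

Lemma enorm_sqrN x : enorm (- x) ^+ 2 = enorm x ^+ 2.
Proof. by rewrite -scaleN1r enorm_sqrZ sqrrN expr1n mul1r. Qed.

Lemma enorm_sqr_le x c : enorm x <= c -> enorm x ^+ 2 <= c ^+ 2.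
Proof. by move=> xc; rewrite ler_sqr ?nnegrE ?(le_trans _ xc) ?enorm_ge0. Qed.

Lemma enorm_sqrB_le x y c : enorm x <= c -> enorm y <= c -> enorm (x - y) ^+ 2 <= 4 * c ^+ 2.
Proof.
move=> /enorm_sqr_le x_le /enorm_sqr_le y_le; have := sqr_ge0 (enorm (x + y)).
by rewrite !enorm_sqrD enorm_sqrN dotvNr; lra.
Qed.

End euclidean.

Lemma ge0_of_quadratic_ge0 (R : realFieldType) (A B : R) :
  (forall s, 0 < s <= 1 -> 0 <= 2 * s * A + s ^+ 2 * B) -> 0 <= A.
Proof.
move=> quad_ge0; rewrite leNgt; apply/negP => A_lt0.
(* at [s = -A / (|B| - A)] the quadratic is at most [s * A * (1 + s) < 0] *)
pose s := - A / (`|B| - A).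
have den_gt0 : 0 < `|B| - A by have := normr_ge0 B; lra.
have s_gt0 : 0 < s by rewrite divr_gt0 //; lra.
have s_le1 : s <= 1 by rewrite ler_pdivrMr //; have := normr_ge0 B; lra.
have sE : s * (`|B| - A) = - A by rewrite divfK // gt_eqF.
have := quad_ge0 s; rewrite s_gt0 s_le1 => /(_ isT).
have := ler_norm B; have : s * A < 0 by rewrite pmulr_rlt0.
nra.
Qed.

Lemma convex_set_segment (R : realType) (n : nat) (S : set 'rV[R]_n)
    (x y : 'rV[R]_n) (s : R) :
  convex_set S -> S x -> S y -> 0 <= s <= 1 -> S (s *: x + (1 - s) *: y).
Proof.
move=> cS Sx Sy /andP[s_ge0 s_le1].
by apply/set_mem/(cS x y (Itv01 s_ge0 s_le1)); apply: mem_set.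
Qed.

Section projection.
Variables (R : realType) (n : nat) (S : set 'rV[R]_n).
Hypothesis convS : convex_set S.

Definition is_projection (z p : 'rV[R]_n) :=
  S p /\ forall y, S y -> enorm (p - z) ^+ 2 <= enorm (y - z) ^+ 2.

Lemma projection_variational z p y :
  is_projection z p -> S y -> 0 <= dotv (p - z) (y - p).
Proof.
move=> [Sp p_min] Sy; apply: ge0_of_quadratic_ge0 (enorm (y - p) ^+ 2) _.
move=> s /andP[s_gt0 s_le1].
have Sq : S (s *: y + (1 - s) *: p).
  by apply: convex_set_segment; rewrite // (ltW s_gt0).
have := p_min _ Sq.
have -> : s *: y + (1 - s) *: p - z = (p - z) + s *: (y - p).
  by apply/rowP => i; rewrite !mxE; ring.
by rewrite (enorm_sqrD (p - z)) enorm_sqrZ dotvZr; lra.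
Qed.

Lemma projection_dist_le z p y :
  is_projection z p -> S y -> enorm (p - y) ^+ 2 <= enorm (z - y) ^+ 2.
Proof.
move=> proj_p Sy; have := projection_variational proj_p Sy.
have -> : z - y = - (p - z) + (p - y) by rewrite opprB addrA subrK.
have -> : y - p = - (p - y) by rewrite opprB.
rewrite (enorm_sqrD (- (p - z))) enorm_sqrN dotvNl dotvNr.
by have := sqr_ge0 (enorm (p - z)); lra.
Qed.

End projection.

Lemma projected_gradient_step_le (R : realType) (n : nat) (S : set 'rV[R]_n)
    (l eta fx fy : R) (x x' y g : 'rV[R]_n) :
  convex_set S -> S y -> 0 < eta -> is_projection S (x - eta *: g) x' ->
  fx + dotv g (y - x) + l / 2 * enorm (x - y) ^+ 2 <= fy ->
  fx - fy <= ((2 * eta)^-1 - l / 2) * enorm (x - y) ^+ 2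
             - (2 * eta)^-1 * enorm (x' - y) ^+ 2 + eta / 2 * enorm g ^+ 2.
Proof.
move=> convS Sy eta_gt0 proj_x' strong.
have := projection_dist_le convS proj_x' Sy.
have -> : x - eta *: g - y = (x - y) + (- eta) *: g by rewrite addrAC scaleNr.
rewrite (enorm_sqrD (x - y)) enorm_sqrZ dotvZr sqrrN => dist_le.
have gE : dotv g (y - x) = - dotv (x - y) g by rewrite -opprB dotvNr dotvC.
rewrite gE in strong.
have inv_eta : (2 * eta)^-1 * (2 * eta) = 1 by rewrite mulVf // gt_eqF ?mulr_gt0.
have inv_gt0 : 0 < (2 * eta)^-1 by rewrite invr_gt0 mulr_gt0.
have := ler_wpM2l (ltW inv_gt0) dist_le.
have -> : eta / 2 = (2 * eta)^-1 * eta ^+ 2.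
  by field; rewrite gt_eqF.
nra.
Qed.

Lemma telescope_weighted_le (R : realDomainType) (c : R) (w d : nat -> R) (T : nat) :
  0 <= c -> (forall t, 0 <= d t) -> (forall t, (1 < t <= T)%N -> w t - c <= w t.-1) ->
  (0 < T)%N ->
  \sum_(1 <= t < T.+1) ((w t - c) * d t - w t * d t.+1)
    <= w 1%N * d 1%N - w T * d T.+1.
Proof.
move=> c_ge0 d_ge0 + T_gt0; case: T T_gt0 => // T _.
elim: T => [|T IH] w_dec.
  by rewrite big_nat1; have := d_ge0 1%N; nra.
have IH' : \sum_(1 <= t < T.+2) ((w t - c) * d t - w t * d t.+1)
    <= w 1%N * d 1%N - w T.+1 * d T.+2.
  by apply: IH => t /andP[t_gt1 t_le]; apply: w_dec; rewrite t_gt1 leqW.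
have w_last : w T.+2 - c <= w T.+1 by apply: w_dec; rewrite leqnn.
by rewrite big_nat_recr //=; have := d_ge0 T.+2; nra.
Qed.

Section online_gradient_descent.
Variables (R : realType) (n : nat) (S : set 'rV[R]_n) (l G : R) (T : nat).
Variables (f : nat -> 'rV[R]_n -> R) (grad : nat -> 'rV[R]_n -> 'rV[R]_n).
Variables (eta : nat -> R) (theta : nat -> 'rV[R]_n) (xs : 'rV[R]_n).
Hypotheses (convS : convex_set S) (l_ge0 : 0 <= l) (T_gt0 : (0 < T)%N) (Sxs : S xs).
Hypothesis eta_gt0 : forall t, (1 <= t <= T)%N -> 0 < eta t.
Hypothesis eta_inv_le : forall t, (1 < t <= T)%N -> (eta t)^-1 - l <= (eta t.-1)^-1.
Hypothesis f_strong : forall t, (1 <= t <= T)%N -> forall x, S x ->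
  f t x + dotv (grad t x) (xs - x) + l / 2 * enorm (x - xs) ^+ 2 <= f t xs.
Hypothesis grad_le : forall t, (1 <= t <= T)%N -> forall x, S x -> enorm (grad t x) <= G.
Hypothesis S_theta1 : S (theta 1%N).
Hypothesis theta_step : forall t, (1 <= t <= T)%N ->
  is_projection S (theta t - eta t *: grad t (theta t)) (theta t.+1).

Lemma ogd_iterate_in t : (1 <= t <= T.+1)%N -> S (theta t).
Proof. by case: t => [//|[//|t]] t_le; case: (theta_step (t := t.+1) t_le). Qed.

Lemma ogd_regret_le :
  \sum_(1 <= t < T.+1) (f t (theta t) - f t xs)
    <= enorm (theta 1%N - xs) ^+ 2 / (2 * eta 1%N)
       + G ^+ 2 / 2 * \sum_(1 <= t < T.+1) eta t.
Proof.
pose d t := enorm (theta t - xs) ^+ 2.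
pose w t := (2 * eta t)^-1.
have step t : (1 <= t < T.+1)%N -> f t (theta t) - f t xs
    <= ((w t - l / 2) * d t - w t * d t.+1) + G ^+ 2 / 2 * eta t.
  rewrite ltnS => t_in.
  have S_t : S (theta t) by apply: ogd_iterate_in; rewrite (andP t_in).1 leqW ?(andP t_in).2.
  have g_le := enorm_sqr_le (grad_le t_in S_t).
  apply: le_trans (projected_gradient_step_le convS Sxs (eta_gt0 t_in)
    (theta_step t_in) (f_strong t_in S_t)) _.
  by rewrite -/(d t) -/(d t.+1) -/(w t); have := eta_gt0 t_in; nra.
apply: le_trans (ler_sum_nat step) _; rewrite big_split /= -mulr_sumr.
have w_dec t : (1 < t <= T)%N -> w t - l / 2 <= w t.-1.
  by move=> t_in; rewrite /w !invfM; have := eta_inv_le t_in; lra.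
have := telescope_weighted_le (d := d) (divr_ge0 l_ge0 (ler0n _ 2)) (fun t => sqr_ge0 _)
  w_dec T_gt0.
have : 0 <= w T * d T.+1.
  by rewrite mulr_ge0 ?sqr_ge0 // invr_ge0 mulr_ge0 // ltW // eta_gt0 // T_gt0 leqnn.
have -> : enorm (theta 1%N - xs) ^+ 2 / (2 * eta 1%N) = w 1%N * d 1%N by rewrite mulrC.
lra.
Qed.

End online_gradient_descent.

Lemma bernoulli_le1 (R : realDomainType) (a : R) (t : nat) :
  0 <= a <= 1 -> (1 - a) ^+ t * (1 + t%:R * a) <= 1.
Proof.
move=> /andP[a_ge0 a_le1]; elim: t => [|t IH]; first by rewrite expr0 mul0r addr0 mul1r.
have pow_ge0 : 0 <= (1 - a) ^+ t by apply: exprn_ge0; lra.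
rewrite exprS -mulrA mulrCA (le_trans _ IH) // ler_wpM2l // -natr1.
by have := ler0n R t; nra.
Qed.

Section step_size.
Variables (R : realFieldType) (l u g : R).
Hypotheses (l_gt0 : 0 < l) (u_gt0 : 0 < u) (g_ge0 : 0 <= g) (g_lt1 : g < 1).

Definition step_size (t : nat) : R := (1 - g) / (l * (g - g ^+ t) + u * (1 - g)).

Let expr_le1 k : g ^+ k <= 1. Proof. exact: exprn_ile1 g_ge0 (ltW g_lt1). Qed.

Let expr_le t : (0 < t)%N -> g ^+ t <= g.
Proof. by case: t => // t _; rewrite exprS ler_piMr. Qed.

Let denom_gt0 t : (0 < t)%N -> 0 < l * (g - g ^+ t) + u * (1 - g).
Proof.
move=> /expr_le expr_le_g; have : 0 < u * (1 - g) by rewrite mulr_gt0 // subr_gt0.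
have : 0 <= l * (g - g ^+ t) by rewrite mulr_ge0 ?subr_ge0 // ltW.
lra.
Qed.

Lemma step_size_gt0 t : (0 < t)%N -> 0 < step_size t.
Proof. by move=> t_gt0; rewrite divr_gt0 ?denom_gt0 // subr_gt0. Qed.

Lemma step_size1 : step_size 1 = u^-1.
Proof.
rewrite /step_size expr1 subrr mulr0 add0r; field.
by rewrite !gt_eqF // subr_gt0.
Qed.

Lemma step_size_inv_sub_le t : (1 < t)%N -> (step_size t)^-1 - l <= (step_size t.-1)^-1.
Proof.
case: t => [|[|t]] // _; rewrite !invf_div /=.
have gc_gt0 : 0 < 1 - g by rewrite subr_gt0.
rewrite lerBlDr ler_pdivrMr // mulrDl divfK ?gt_eqF //.
have : l * (g ^+ t.+1 * (1 - g)) <= l * (1 - g).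
  by have := ler_piMl (ltW gc_gt0) (expr_le1 t.+1); apply: ler_wpM2l; apply: ltW.
by rewrite [g ^+ t.+2]exprSr; lra.
Qed.

Lemma step_size_le t : (0 < t)%N -> step_size t <= (t%:R^-1 + (1 - g)) / Num.min l u.
Proof.
move=> t_gt0; rewrite /step_size.
set m := Num.min l u; set a := 1 - g; set Dn := l * _ + _.
have Dn_gt0 : 0 < Dn := denom_gt0 t_gt0.
have t_gt0' : 0 < (t%:R : R) by rewrite ltr0n.
have m_gt0 : 0 < m by rewrite lt_min l_gt0.
have a_gt0 : 0 < a by rewrite subr_gt0.
have bern : g ^+ t * (1 + t%:R * a) <= 1.
  by rewrite -[g](subKr 1) -/a; apply: bernoulli_le1; rewrite (ltW a_gt0) /a gerBl.
have m_le_l : m <= l by rewrite ge_min lexx.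
have m_le_u : m <= u by rewrite ge_min lexx orbT.
have Dn_ge : m * (1 - g ^+ t) <= Dn.
  have := ler_wpM2r (ltW a_gt0) m_le_u.
  have gt_le : 0 <= g - g ^+ t by rewrite subr_ge0 expr_le.
  have := ler_wpM2r gt_le m_le_l.
  rewrite /Dn /a; lra.
have bern_lb : t%:R * a <= (1 - g ^+ t) * (1 + t%:R * a) by lra.
rewrite ler_pdivrMr //.
have coef_ge0 : 0 <= (t%:R^-1 + a) / m.
  by apply: divr_ge0; [rewrite addr_ge0 ?invr_ge0 // ltW | exact: ltW].
apply: le_trans (ler_wpM2l coef_ge0 Dn_ge).
have -> : (t%:R^-1 + a) / m * (m * (1 - g ^+ t))
    = t%:R^-1 * ((1 - g ^+ t) * (1 + t%:R * a)).
  by field; rewrite !gt_eqF.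
by rewrite ler_pdivlMl.
Qed.

End step_size.

Lemma powR_ge1 (R : realType) (x e : R) : 1 <= x -> 0 <= e -> 1 <= x `^ e.
Proof. by move=> x_ge1 e_ge0; rewrite -[X in X <= _](powRr0 x) ler_powR. Qed.

Lemma harmonic_le_1Dln (R : realType) (N : nat) : (0 < N)%N ->
  \sum_(1 <= t < N.+1) (t%:R : R)^-1 <= 1 + ln N%:R.
Proof.
case: N => // N _; elim: N => [|N IH]; first by rewrite big_nat1 invr1 ln1 addr0.
rewrite big_nat_recr //= -[N.+2%:R]natr1.
set x : R := N.+1%:R in IH *; have x_gt0 : 0 < x by rewrite ltr0n.
(* [ln (1 + y) <= y] at [y = -1 / (x + 1)] gives [1 / (x + 1) <= ln (x + 1) - ln x] *)
have := @le_ln1Dx R (- (x + 1)^-1).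
have x1_gt0 : 0 < x + 1 by rewrite ltr_wpDl.
rewrite ltrN2 invf_lt1 // ltrDr => /(_ x_gt0).
have -> : 1 - (x + 1)^-1 = x / (x + 1) by field; rewrite gt_eqF.
rewrite ln_div ?posrE //; lra.
Qed.

Lemma harmonic_le_powR (R : realType) (N : nat) (e : R) : (0 < N)%N -> 0 < e ->
  \sum_(1 <= t < N.+1) (t%:R : R)^-1 <= (1 + e^-1) * N%:R `^ e.
Proof.
move=> N_gt0 e_gt0; apply: le_trans (harmonic_le_1Dln R N_gt0) _.
have N_ge1 : (1 : R) <= N%:R by rewrite ler1n.
have pow_ge1 : 1 <= N%:R `^ e by rewrite powR_ge1 // ltW.
have := ln_sublinear (lt_le_trans ltr01 pow_ge1).
rewrite ln_powR -ltr_pdivlMl // => ln_lt.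
by have : 0 < e^-1 * N%:R `^ e; [rewrite mulr_gt0 ?invr_gt0 // (lt_le_trans ltr01) | nra].
Qed.

Lemma sum_step_size_le (R : realFieldType) (l u g : R) (T : nat) :
  0 < l -> 0 < u -> 0 <= g < 1 ->
  \sum_(1 <= t < T.+1) step_size l u g t
    <= (\sum_(1 <= t < T.+1) (t%:R : R)^-1 + T%:R * (1 - g)) / Num.min l u.
Proof.
move=> l_gt0 u_gt0 /andP[g_ge0 g_lt1].
have step t : (1 <= t < T.+1)%N -> step_size l u g t <= (t%:R^-1 + (1 - g)) / Num.min l u.
  by case/andP=> t_gt0 _; exact: step_size_le.
apply: le_trans (ler_sum_nat step) _.
by rewrite -mulr_suml big_split /= sumr_const_nat subSS subn0 mulr_natl.
Qed.

Lemma inv_powR_gt0_le1 (R : realType) (T : nat) (beta : R) : (0 < T)%N -> 0 <= beta ->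
  0 < (T%:R `^ beta)^-1 <= 1.
Proof.
move=> T_gt0 beta_ge0; have pow_ge1 : 1 <= T%:R `^ beta by rewrite powR_ge1 ?ler1n.
by rewrite invr_gt0 invf_le1 ?(lt_le_trans ltr01) // (lt_le_trans ltr01).
Qed.

Lemma sum_step_size_le_powR (R : realType) (l u beta : R) (T : nat) :
  0 < l -> 0 < u -> 0 < beta < 1 -> (0 < T)%N ->
  \sum_(1 <= t < T.+1) step_size l u (1 - (T%:R `^ beta)^-1) t
    <= (2 + (1 - beta)^-1) / Num.min l u * T%:R `^ (1 - beta).
Proof.
move=> l_gt0 u_gt0 /andP[beta_gt0 beta_lt1] T_gt0.
have /andP[a_gt0 a_le1] := inv_powR_gt0_le1 T_gt0 (ltW beta_gt0).
have g_in : 0 <= 1 - (T%:R `^ beta)^-1 < 1 by apply/andP; split; lra.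
apply: le_trans (sum_step_size_le T l_gt0 u_gt0 g_in) _; rewrite subKr.
have -> : T%:R * (T%:R `^ beta)^-1 = T%:R `^ (1 - beta) :> R.
  by rewrite powRB ?powRr1 // pnatr_eq0 -lt0n T_gt0 implybT.
have eps_gt0 : 0 < 1 - beta by rewrite subr_gt0.
have harm := harmonic_le_powR T_gt0 eps_gt0.
rewrite mulrAC ler_pM2r ?invr_gt0 ?lt_min ?l_gt0 //.
by lra.
Qed.

Unset Implicit Arguments. Set Strict Implicit.

Theorem theorem3p5 (R : realType) (l u G D beta : R) :
  0 < l -> 0 < u -> 0 < beta < 1 ->
  exists C : R, forall (n T : nat) (S : set 'rV[R]_n)
    (f : nat -> 'rV[R]_n -> R) (grad : nat -> 'rV[R]_n -> 'rV[R]_n)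
    (theta : nat -> 'rV[R]_n) (theta_star : 'rV[R]_n),
    (0 < T)%N ->
    compact S -> convex_set S ->
    (forall x, S x -> enorm x <= D) ->
    (forall t, (1 <= t <= T)%N -> forall x, S x -> has_gradient (f t) x (grad t x)) ->
    (forall t, (1 <= t <= T)%N -> forall x y, S x -> S y ->
       f t y >= f t x + dotv (grad t x) (y - x) + l / 2 * enorm (x - y) ^+ 2) ->
    (forall t, (1 <= t <= T)%N -> forall x y, S x -> S y ->
       enorm (grad t x - grad t y) <= u * enorm (x - y)) ->
    (forall t, (1 <= t <= T)%N -> forall x, S x -> enorm (grad t x) <= G) ->
    let gamma := 1 - ((T%:R : R) `^ beta)^-1 in
    let eta := fun t : nat =>
      (1 - gamma) / (l * (gamma - gamma ^+ t) + u * (1 - gamma)) in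
    S (theta 1%N) ->
    (forall t, (1 <= t <= T)%N ->
       S (theta t.+1) /\
       forall y, S y ->
         enorm (theta t.+1 - (theta t - eta t *: grad t (theta t))) ^+ 2
         <= enorm (y - (theta t - eta t *: grad t (theta t))) ^+ 2) ->
    S theta_star ->
    (forall y, S y ->
       \sum_(1 <= t < T.+1) f t theta_star <= \sum_(1 <= t < T.+1) f t y) ->
    \sum_(1 <= t < T.+1) (f t (theta t) - f t theta_star)
      <= C * (T%:R : R) `^ (1 - beta).
Proof.
move=> l_gt0 u_gt0 beta_in.
pose K := (2 + (1 - beta)^-1) / Num.min l u.
exists (2 * u * D ^+ 2 + G ^+ 2 / 2 * K).
move=> n T S f grad theta xs T_gt0 _ convS D_bound _ strong _ G_bound gamma eta
  S_theta1 theta_step Sxs _.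
have /andP[a_gt0 a_le1] := inv_powR_gt0_le1 T_gt0 (ltW (andP beta_in).1).
have g_ge0 : 0 <= gamma by rewrite subr_ge0.
have g_lt1 : gamma < 1 by rewrite ltrBlDr ltrDl.
have := ogd_regret_le (f := f) (eta := eta) convS (ltW l_gt0) T_gt0 Sxs
  (fun t ht => step_size_gt0 l_gt0 u_gt0 g_ge0 g_lt1 (andP ht).1)
  (fun t ht => step_size_inv_sub_le _ l_gt0 g_ge0 g_lt1 (andP ht).1)
  (fun t ht x Sx => strong t ht x xs Sx Sxs) G_bound S_theta1 theta_step.
have -> : eta 1%N = u^-1 := step_size1 _ u_gt0 g_lt1.
have sum_eta : \sum_(1 <= t < T.+1) eta t <= K * T%:R `^ (1 - beta).
  exact: sum_step_size_le_powR.
have dist1 : enorm (theta 1%N - xs) ^+ 2 / (2 * u^-1) <= 2 * u * D ^+ 2.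
  have /(ler_wpM2r (ltW u_gt0)) := enorm_sqrB_le (D_bound _ S_theta1) (D_bound _ Sxs).
  by rewrite invfM invrK; lra.
have pow_ge1 : 1 <= T%:R `^ (1 - beta).
  by rewrite powR_ge1 ?ler1n // subr_ge0 ltW // (andP beta_in).2.
have := ler_wpM2l (divr_ge0 (sqr_ge0 G) (ler0n R 2)) sum_eta.
have := ler_peMr (mulr_ge0 (mulr_ge0 (ler0n R 2) (ltW u_gt0)) (sqr_ge0 D)) pow_ge1.
lra.
Qed.
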